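(* Let $p=(p_1,\dots,p_m)$ and $q=(q_1,\dots,q_m)$ be ordered $m$-tuples of distinct points of $\overline{\mathbf H^n_{\mathbb H}}$, each with the first $i$ points in $\partial\mathbf H^n_{\mathbb H}$ and the remaining points in $\mathbf H^n_{\mathbb H}$, and let $G_1,G_2$ be semi-normalized Gram matrices of lifts of $p$ and $q$, represented by $V_{G_1},V_{G_2}$. Then $p$ and $q$ are congruent under $\mathrm{PSp}(n,1)$ if and only if $O_{V_{G_1}}=O_{V_{G_2}}$.
   Context: Setting: $m\ge4$, $3\le i\le m$; $\mathbb H^{n,1}$ is the right quaternionic space $\mathbb H^{n+1}$ with form $\langle\mathbf z,\mathbf w\rangle=\bar w_{n+1}z_1+\bar w_2z_2+\cdots+\bar w_nz_n+\bar w_1z_{n+1}$; $\mathbf H^n_{\mathbb H}$ and $\partial\mathbf H^n_{\mathbb H}$ are the lines of negative and of nonzero null vectors; $\mathrm{PSp}(n,1)=\mathrm{Sp}(n,1)/\{\pm I\}$ with $\mathrm{Sp}(n,1)$ the form-preserving group; $p,q$ congruent means some $g\in\mathrm{PSp}(n,1)$ has $g(p_k)=q_k$ for all $k$. The Gram matrix of a lift is $g_{kj}=\langle\mathbf p_j,\mathbf p_k\rangle$; it is semi-normalized if $g_{kk}=0$ for $k\le i$, $g_{kk}=-1$ for $k>i$, $g_{1j}=1$ for $2\le j\le i$, $|g_{23}|=1$, and $g_{1j}=r_{1j}>0$ real for $i<j\le m$. It is represented by $V_G=(r_{1(i+1)},\dots,r_{1m},g_{23},\dots,g_{2m},g_{34},\dots,g_{3m},\dots,g_{(m-1)m})$,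 and $O_V=\{\bar\mu V\mu:\mu\text{ a unit quaternion}\}$ (componentwise). *)

From mathcomp Require Import all_boot all_order all_algebra.
From mathcomp Require Import reals.
Set Implicit Arguments. Unset Strict Implicit. Unset Printing Implicit Defensive.
Import Order.TTheory GRing.Theory Num.Theory.
Local Open Scope ring_scope.

Record quat (R : Type) := Quat { qre : R; qi : R; qj : R; qk : R }.

Section Quaternions.
Variable R : realType.

Definition qzero : quat R := Quat 0 0 0 0.
Definition qone : quat R := Quat 1 0 0 0.
Definition qreal (r : R) : quat R := Quat r 0 0 0.
Definition qadd (x y : quat R) : quat R :=
  Quat (qre x + qre y) (qi x + qi y) (qj x + qj y) (qk x + qk y).
Definition qmul (x y : quat R) : quat R :=
  Quat (qre x * qre y - qi x * qi y - qj x * qj y - qk x * qk y)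
       (qre x * qi y + qi x * qre y + qj x * qk y - qk x * qj y)
       (qre x * qj y - qi x * qk y + qj x * qre y + qk x * qi y)
       (qre x * qk y + qi x * qj y - qj x * qi y + qk x * qre y).
Definition qconj (x : quat R) : quat R := Quat (qre x) (- qi x) (- qj x) (- qk x).
Definition qnorm2 (x : quat R) : R := qre x ^+ 2 + qi x ^+ 2 + qj x ^+ 2 + qk x ^+ 2.
Definition qabs (x : quat R) : R := Num.sqrt (qnorm2 x).

Definition qsum (N : nat) (f : 'I_N -> quat R) : quat R := \big[qadd/qzero]_(k < N) f k.

(* vectors of the right quaternionic space H^{n+1}; coordinates z_1..z_{n+1}
   are indexed 0..n *)
Definition qvec (n : nat) := 'I_n.+1 -> quat R.

Definition Jidx (n : nat) (k : 'I_n.+1) : 'I_n.+1 :=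
  if val k == 0%N then ord_max else if val k == n then ord0 else k.

(* <z,w> = wbar_{n+1} z_1 + wbar_2 z_2 + ... + wbar_n z_n + wbar_1 z_{n+1} *)
Definition hform (n : nat) (z w : qvec n) : quat R :=
  qsum (fun k => qmul (qconj (w (Jidx k))) (z k)).

(* z and w span the same (right) quaternionic line, i.e. are the same point *)
Definition samept (n : nat) (z w : qvec n) : Prop :=
  exists l : quat R, l <> qzero /\ forall k, w k = qmul (z k) l.

(* nonzero null vector: lift of a point of the boundary *)
Definition null_vec (n : nat) (z : qvec n) : Prop :=
  (exists k, z k <> qzero) /\ hform z z = qzero.
(* negative vector: lift of a point of H^n_H *)
Definition neg_vec (n : nat) (z : qvec n) : Prop :=
  exists x : R, x < 0 /\ hform z z = qreal x.

Definition qmat (n : nat) := 'I_n.+1 -> 'I_n.+1 -> quat R.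
Definition mact (n : nat) (A : qmat n) (z : qvec n) : qvec n :=
  fun r => qsum (fun c => qmul (A r c) (z c)).
Definition in_Sp (n : nat) (A : qmat n) : Prop :=
  forall z w, hform (mact A z) (mact A w) = hform z w.

Definition gram (n m : nat) (P : 'I_m -> qvec n) : 'I_m -> 'I_m -> quat R :=
  fun k j => hform (P j) (P k).

(* entry access with 0-based nat indices (qzero out of range) *)
Definition gentry (m : nat) (G : 'I_m -> 'I_m -> quat R) (k j : nat) : quat R :=
  match (insub k : option 'I_m), (insub j : option 'I_m) with
  | Some k', Some j' => G k' j'
  | _, _ => qzero
  end.

(* semi-normalized (paper indices 1..m shifted to 0..m-1) *)
Definition semi_normalized (m i : nat) (G : 'I_m -> 'I_m -> quat R) : Prop :=
  [/\ (forall k, (k < i)%N -> gentry G k k = qzero),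
      (forall k, (i <= k < m)%N -> gentry G k k = qreal (-1)),
      (forall j, (1 <= j < i)%N -> gentry G 0 j = qone),
      qabs (gentry G 1 2) = 1 &
      (forall j, (i <= j < m)%N -> exists r : R, 0 < r /\ gentry G 0 j = qreal r)].

(* V_G = (r_{1(i+1)},...,r_{1m}, g_23,...,g_2m, g_34,...,g_3m, ..., g_{(m-1)m}) *)
Definition Vrep (m i : nat) (G : 'I_m -> 'I_m -> quat R) : seq (quat R) :=
  [seq gentry G 0 j | j <- iota i (m - i)] ++
  flatten [seq [seq gentry G k j | j <- iota k.+1 (m - k.+1)] | k <- iota 1 (m - 2)].

(* O_V = { mubar V mu : mu unit quaternion }, as a predicate *)
Definition orbitV (V W : seq (quat R)) : Prop :=
  exists mu : quat R, qnorm2 mu = 1 /\ W = [seq qmul (qmul (qconj mu) v) mu | v <- V].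

(* ordered m-tuple of distinct points, first i on the boundary, rest inside,
   given by lifts P *)
Definition config (n m i : nat) (P : 'I_m -> qvec n) : Prop :=
  [/\ (forall k : 'I_m, (k < i)%N -> null_vec (P k)),
      (forall k : 'I_m, (i <= k)%N -> neg_vec (P k)) &
      (forall j k : 'I_m, j != k -> ~ samept (P j) (P k))].

(* p, q congruent: some g in Sp(n,1) (hence in PSp(n,1)) maps p_k to q_k *)
Definition congruent (n m : nat) (P Q : 'I_m -> qvec n) : Prop :=
  exists A : qmat n, in_Sp A /\ forall k, samept (mact A (P k)) (Q k).

End Quaternions.

(* If g in Sp(n,1) maps p_k to q_k, the lifts satisfy q_k = g p_k lam_k, so the
   Gram matrices are related by G2_kj = lam_k^* G1_kj lam_j.  The normalisation
   (g_1j = 1 for boundary points, |g_23| = 1, g_1j > 0 for interior points)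
   forces all lam_k to be one unit quaternion mu, i.e. V_G2 = mu^* V_G1 mu.

   Conversely, V_G2 = mu^* V_G1 mu together with the normalised entries and
   hermitian symmetry gives G2 = mu^* G1 mu, so the lifts q_k mu^* have the
   same Gram matrix as the p_k.  A Witt-type argument then builds an element
   of Sp(n,1) mapping p_k to q_k mu^* one point at a time, composing the
   isometries z |-> z + d kappa <z,d> along d = x - y.  The transvection fails
   only when <d,d> = 0, but d is orthogonal to the negative vector p_1 - p_2
   (kept fixed throughout), and a null vector orthogonal to a negative one
   vanishes, so then x = y already. *)

From HB Require Import structures.
From mathcomp Require Import all_boot all_order all_algebra.
From mathcomp Require Import reals.
From mathcomp Require Import ring lra zify.
Set Implicit Arguments. Unset Strict Implicit. Unset Printing Implicit Defensive.
Import Order.TTheory GRing.Theory Num.Theory.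
Local Open Scope ring_scope.

Definition quat_tuple (R : Type) (x : quat R) := (qre x, qi x, qj x, qk x).
Definition tuple_quat (R : Type) (t : R * R * R * R) := Quat t.1.1.1 t.1.1.2 t.1.2 t.2.
Lemma quat_tupleK (R : Type) : cancel (@quat_tuple R) (@tuple_quat R).
Proof. by case. Qed.

HB.instance Definition _ (R : realType) :=
  Equality.copy (quat R) (can_type (@quat_tupleK R)).
HB.instance Definition _ (R : realType) :=
  Choice.copy (quat R) (can_type (@quat_tupleK R)).

Definition qopp (R : realType) (x : quat R) : quat R :=
  Quat (- qre x) (- qi x) (- qj x) (- qk x).

Ltac quat_ring := hnf; intros;
  repeat match goal with x : quat _ |- _ => destruct x end;
  rewrite /= /qadd /qmul /qopp /qconj /qreal /qzero /qone /qnorm2 /=;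
  try congr Quat; ring.

Section QuatRingAxioms.
Variable R : realType.

Lemma qaddA : associative (@qadd R). Proof. quat_ring. Qed.
Lemma qaddC : commutative (@qadd R). Proof. quat_ring. Qed.
Lemma qadd0 : left_id (qzero R) (@qadd R). Proof. quat_ring. Qed.
Lemma qaddN : left_inverse (qzero R) (@qopp R) (@qadd R). Proof. quat_ring. Qed.
Lemma qmulA : associative (@qmul R). Proof. quat_ring. Qed.
Lemma q1mul : left_id (qone R) (@qmul R). Proof. quat_ring. Qed.
Lemma qmul1 : right_id (qone R) (@qmul R). Proof. quat_ring. Qed.
Lemma qmulDl : left_distributive (@qmul R) (@qadd R). Proof. quat_ring. Qed.
Lemma qmulDr : right_distributive (@qmul R) (@qadd R). Proof. quat_ring. Qed.
Lemma qone_neq0 : qone R != qzero R.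
Proof. by apply/eqP => /(congr1 (@qre R)) /eqP; rewrite oner_eq0. Qed.

End QuatRingAxioms.

HB.instance Definition _ (R : realType) :=
  GRing.isZmodule.Build (quat R) (@qaddA R) (@qaddC R) (@qadd0 R) (@qaddN R).
HB.instance Definition _ (R : realType) :=
  GRing.Zmodule_isNzRing.Build (quat R) (@qmulA R) (@q1mul R) (@qmul1 R)
    (@qmulDl R) (@qmulDr R) (@qone_neq0 R).

Section QuatOperations.
Variable R : realType.
Implicit Types (x y : quat R).

Lemma quat_addE x y : x + y = qadd x y. Proof. by []. Qed.
Lemma quat_mulE x y : x * y = qmul x y. Proof. by []. Qed.
Lemma quat_oppE x : - x = qopp x. Proof. by []. Qed.
Lemma quat_0E : 0 = qzero R. Proof. by []. Qed.
Lemma quat_1E : 1 = qone R. Proof. by []. Qed.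

End QuatOperations.

Ltac quat_alg :=
  rewrite ?quat_addE ?quat_mulE ?quat_oppE ?quat_0E ?quat_1E; quat_ring.

Section QuatTheory.
Variable R : realType.
Implicit Types (x y : quat R) (r s : R).

Lemma qconjD x y : qconj (x + y) = qconj x + qconj y. Proof. quat_alg. Qed.
Lemma qconjN x : qconj (- x) = - qconj x. Proof. quat_alg. Qed.
Lemma qconjM x y : qconj (x * y) = qconj y * qconj x. Proof. quat_alg. Qed.
Lemma qconjK x : qconj (qconj x) = x. Proof. quat_alg. Qed.
Lemma qconj0 : qconj 0 = 0 :> quat R. Proof. quat_alg. Qed.
Lemma qconj1 : qconj 1 = 1 :> quat R. Proof. quat_alg. Qed.
Lemma qconj_sum N (f : 'I_N -> quat R) : qconj (\sum_k f k) = \sum_k qconj (f k).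
Proof. exact: (big_morph _ qconjD qconj0). Qed.

Lemma qrealM r s : qreal (r * s) = qreal r * qreal s. Proof. quat_alg. Qed.
Lemma qrealN r : qreal (- r) = - qreal r. Proof. quat_alg. Qed.
Lemma qreal_mulC r x : qreal r * x = x * qreal r. Proof. quat_alg. Qed.
Lemma qreal_inj : injective (@qreal R). Proof. by move=> r s /(congr1 (@qre R)). Qed.

Lemma qconj_mul x : qconj x * x = qreal (qnorm2 x). Proof. quat_alg. Qed.
Lemma qmul_conj x : x * qconj x = qreal (qnorm2 x). Proof. quat_alg. Qed.
Lemma qnorm2M x y : qnorm2 (x * y) = qnorm2 x * qnorm2 y. Proof. quat_alg. Qed.
Lemma qnorm2_conj x : qnorm2 (qconj x) = qnorm2 x. Proof. quat_alg. Qed.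
Lemma qnorm2_real r : qnorm2 (qreal r) = r ^+ 2. Proof. quat_alg. Qed.
Lemma qnorm2_1 : qnorm2 1 = 1 :> R. Proof. quat_alg. Qed.

Lemma qnorm2_ge0 x : 0 <= qnorm2 x.
Proof. by case: x => a b c d; rewrite /qnorm2 /= !addr_ge0 ?sqr_ge0. Qed.

Lemma qnorm2_eq0 x : (qnorm2 x == 0) = (x == 0).
Proof.
apply/eqP/eqP => [|->]; last by quat_alg.
case: x => a b c d; rewrite /qnorm2 /= => h.
have [-> -> -> ->] : [/\ a = 0, b = 0, c = 0 & d = 0] by split; nra.
by [].
Qed.

Lemma qunit_norm x : qnorm2 x = 1 -> x * qconj x = 1 /\ qconj x * x = 1.
Proof. by move=> h; rewrite qmul_conj qconj_mul h. Qed.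

Lemma qunit_eq x y : qnorm2 x = 1 -> qconj x * y = 1 -> y = x.
Proof.
by move=> /qunit_norm [x_conj _] xy; rewrite -[y]mul1r -x_conj -mulrA xy mulr1.
Qed.

Definition qinv x := qreal (qnorm2 x)^-1 * qconj x.

Lemma qmulVr : {in [pred x : quat R | x != 0], left_inverse 1 qinv *%R}.
Proof.
move=> x; rewrite inE -qnorm2_eq0 => x0.
by rewrite /qinv -mulrA qconj_mul -qrealM mulVf.
Qed.

Lemma qdivrr : {in [pred x : quat R | x != 0], right_inverse 1 qinv *%R}.
Proof.
move=> x; rewrite inE -qnorm2_eq0 => x0.
by rewrite /qinv qreal_mulC mulrA qmul_conj -qrealM mulfV.
Qed.

Lemma qunitP x y : y * x = 1 /\ x * y = 1 -> x != 0.
Proof. by case=> _ h; apply: contra_eq_neq h => ->; rewrite mul0r eq_sym oner_neq0. Qed.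

Lemma qinv_out : {in [predC [pred x : quat R | x != 0]], qinv =1 id}.
Proof. by move=> x; rewrite !inE negbK => /eqP ->; rewrite /qinv qconj0 mulr0. Qed.

End QuatTheory.

HB.instance Definition _ (R : realType) :=
  GRing.NzRing_hasMulInverse.Build (quat R) (@qmulVr R) (@qdivrr R) (@qunitP R) (@qinv_out R).

Lemma qunitE (R : realType) (x : quat R) : (x \is a GRing.unit) = (x != 0).
Proof. by []. Qed.

Section HermitianForm.
Variables (R : realType) (n : nat).
Local Notation vec := (qvec R n).
Implicit Types z w u d x y : vec.

Lemma val_Jidx (k : 'I_n.+1) :
  val (Jidx k) = if val k == 0 then n else if val k == n then 0 else val k.
Proof. by rewrite /Jidx; case: ifP => //; case: ifP. Qed.

Lemma JidxK : involutive (@Jidx n).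
Proof.
move=> k; apply: val_inj; rewrite !val_Jidx; move: (val k) => v.
case: (eqVneq v 0) => [->|v0]; first by rewrite eqxx; case: eqP.
case: (eqVneq v n) => [->|vn]; first by rewrite eqxx.
by rewrite (negPf v0) (negPf vn).
Qed.

Lemma hformE z w : hform z w = \sum_k qconj (w (Jidx k)) * z k.
Proof. by []. Qed.

Lemma eq_hform z z' w w' : z =1 z' -> w =1 w' -> hform z w = hform z' w'.
Proof. by move=> hz hw; rewrite !hformE; apply: eq_bigr => k _; rewrite hz hw. Qed.

Lemma hformC z w : hform z w = qconj (hform w z).
Proof.
rewrite !hformE qconj_sum (reindex_inj (inv_inj JidxK)) /=.
by apply: eq_bigr => k _; rewrite qconjM qconjK JidxK.
Qed.

Lemma hformDl z z' w : hform (fun r => z r + z' r) w = hform z w + hform z' w.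
Proof. by rewrite !hformE -big_split; apply: eq_bigr => k _; rewrite mulrDr. Qed.

Lemma hformZl z a w : hform (fun r => z r * a) w = hform z w * a.
Proof. by rewrite !hformE mulr_suml; apply: eq_bigr => k _; rewrite mulrA. Qed.

Lemma hformNl z w : hform (fun r => - z r) w = - hform z w.
Proof. by rewrite -mulrN1 -hformZl; apply: eq_hform => // r; rewrite mulrN1. Qed.

Lemma hformBl z z' w : hform (fun r => z r - z' r) w = hform z w - hform z' w.
Proof. by rewrite hformDl hformNl. Qed.

Lemma hformDr z w w' : hform z (fun r => w r + w' r) = hform z w + hform z w'.
Proof. by rewrite hformC hformDl qconjD -!hformC. Qed.

Lemma hformZr z w a : hform z (fun r => w r * a) = qconj a * hform z w.
Proof. by rewrite hformC hformZl qconjM -hformC. Qed.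

Lemma hformNr z w : hform z (fun r => - w r) = - hform z w.
Proof. by rewrite hformC hformNl qconjN -hformC. Qed.

Lemma hformBr z w w' : hform z (fun r => w r - w' r) = hform z w - hform z w'.
Proof. by rewrite hformDr hformNr. Qed.

Lemma qre_hform_self z : z ord0 = z ord_max -> qre (hform z z) = \sum_k qnorm2 (z k).
Proof.
move=> z0; rewrite hformE (big_morph (@qre R) (id1 := 0) (op1 := +%R)) //.
apply: eq_bigr => k _; have -> : z (Jidx k) = z k; last by rewrite qconj_mul.
rewrite /Jidx; case: ifP => [/eqP k0|_]; first by rewrite -z0; congr z; apply: val_inj.
by case: ifP => // /eqP kn; rewrite z0; congr z; apply: val_inj.
Qed.

Lemma qre_hform_self_ge0 z : z ord0 = z ord_max -> 0 <= qre (hform z z).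
Proof. by move=> z0; rewrite qre_hform_self // sumr_ge0 // => k _; apply: qnorm2_ge0. Qed.

Lemma null_orthogonal_negative_eq0 u d c :
  hform u u = qreal c -> c < 0 -> hform d u = 0 -> hform d d = 0 -> forall k, d k = 0.
Proof.
move=> hu hc hdu hdd.
set al := u ord_max - u ord0; set be := d ord_max - d ord0.
have al_neq0 : al != 0.
  apply/eqP => /eqP; rewrite subr_eq0 => /eqP u0.
  by have := qre_hform_self_ge0 (esym u0); rewrite hu /=; lra.
(* shifting d along u equalises its first and last coordinates, which makes
   its self-product a sum of squared norms *)
pose b := - (al^-1 * be); pose w r := d r + u r * b.
have w0 : w ord0 = w ord_max.
  apply/eqP; rewrite eq_sym -subr_eq0 /w opprD addrACA -mulrBl -/be -/al.
  by rewrite /b mulrN mulrA mulrV ?qunitE // mul1r subrr.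
have hww : hform w w = qreal (c * qnorm2 b).
  rewrite /w hformDl !hformDr !hformZl !hformZr hdd hu [hform u d]hformC hdu qconj0.
  by rewrite mulr0 mul0r !add0r -mulrA qreal_mulC mulrA qconj_mul -qrealM mulrC.
have b0 : b = 0.
  have := qre_hform_self_ge0 w0; rewrite hww /= => hb.
  by apply/eqP; rewrite -qnorm2_eq0 eq_le qnorm2_ge0 andbT; nra.
have wd r : w r = d r by rewrite /w b0 mulr0 addr0.
have d0 : d ord0 = d ord_max by rewrite -!wd.
have := qre_hform_self d0; rewrite hdd /= => /esym /eqP.
rewrite psumr_eq0 => [/allP dk k|k _]; last exact: qnorm2_ge0.
by apply/eqP; rewrite -qnorm2_eq0; apply: (implyP (dk k (mem_index_enum k))).
Qed.

End HermitianForm.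

Section SymplecticMaps.
Variables (R : realType) (n : nat).
Local Notation vec := (qvec R n).
Local Notation mat := (qmat R n).
Implicit Types (z w u d x y s : vec) (A B : mat).

Lemma mactE A z r : mact A z r = \sum_c A r c * z c.
Proof. by []. Qed.

Lemma eq_mact A z z' : z =1 z' -> mact A z =1 mact A z'.
Proof. by move=> h r; rewrite !mactE; apply: eq_bigr => c _; rewrite h. Qed.

Definition mmul B A : mat := fun r c => \sum_k B r k * A k c.

Lemma mact_mmul B A z : mact (mmul B A) z =1 mact B (mact A z).
Proof.
move=> r; rewrite !mactE /mmul; under eq_bigr do rewrite mulr_suml.
rewrite exchange_big /=; apply: eq_bigr => k _.
by rewrite mactE mulr_sumr; apply: eq_bigr => c _; rewrite mulrA.
Qed.

Lemma in_Sp_mmul B A : in_Sp B -> in_Sp A -> in_Sp (mmul B A).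
Proof. by move=> hB hA z w; rewrite (eq_hform (mact_mmul B A z) (mact_mmul B A w)) hB hA. Qed.

Definition dmat (a : quat R) : mat := fun r c => if r == c then a else 0.

Lemma mact_dmat a z r : mact (dmat a) z r = a * z r.
Proof.
rewrite mactE (bigD1 r) //= /dmat eqxx big1 ?addr0 // => c /negPf.
by rewrite eq_sym => ->; rewrite mul0r.
Qed.

Lemma in_Sp_dmat a : qnorm2 a = 1 -> in_Sp (dmat a).
Proof.
move=> a1 z w; rewrite !hformE; apply: eq_bigr => k _.
by rewrite !mact_dmat qconjM -mulrA [qconj a * _]mulrA qconj_mul a1 mul1r.
Qed.

Definition transvection d (kappa : quat R) : mat :=
  fun r c => (if r == c then 1 else 0) + d r * kappa * qconj (d (Jidx c)).

Lemma mact_transvection d kappa z r :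
  mact (transvection d kappa) z r = z r + d r * (kappa * hform z d).
Proof.
rewrite mactE /transvection; under eq_bigr do rewrite mulrDl.
rewrite big_split /=; congr (_ + _).
  rewrite (bigD1 r) //= eqxx mul1r big1 ?addr0 // => c /negPf.
  by rewrite eq_sym => ->; rewrite mul0r.
by rewrite hformE !mulr_sumr; apply: eq_bigr => c _; rewrite !mulrA.
Qed.

Lemma in_Sp_transvection d kappa :
  kappa + qconj kappa + qconj kappa * hform d d * kappa = 0 ->
  in_Sp (transvection d kappa).
Proof.
move=> hk z w.
rewrite (eq_hform (mact_transvection d kappa z) (mact_transvection d kappa w)).
rewrite hformDl !hformDr !hformZl !hformZr [hform d w]hformC.
set a := hform z d; set b := hform w d; rewrite !qconjM -addrA.
have -> : qconj b * qconj kappa * a + (qconj b * (kappa * a) +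
    qconj b * qconj kappa * hform d d * (kappa * a)) =
    qconj b * (kappa + qconj kappa + qconj kappa * hform d d * kappa) * a.
  by rewrite !mulrDr !mulrDl !mulrA addrCA addrA.
by rewrite hk mulr0 mul0r addr0.
Qed.

Lemma exists_reflection x y :
  hform x x = hform y y -> hform (fun r => x r - y r) (fun r => x r - y r) != 0 ->
  exists T, [/\ in_Sp T, mact T x =1 y &
    forall s, hform s (fun r => x r - y r) = 0 -> mact T s =1 s].
Proof.
set d := fun r => x r - y r => hxy hd.
set p := hform x d.
have hdd : hform d d = p + qconj p.
  by rewrite /p -hformC /d !hformBl !hformBr hxy opprB.
have p0 : p != 0 by apply: contraNneq hd => p0; rewrite hdd p0 qconj0 addr0.
(* <d,d> = p + p^* is what makes kappa = - p^-1 an isometry *)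
exists (transvection d (- p^-1)); split.
- apply: in_Sp_transvection; rewrite hdd qconjN mulNr mulrNN mulrDr mulrDl.
  rewrite -(mulrA _ p) mulrV ?qunitE // mulr1 -qconjM mulrV ?qunitE // qconj1 mul1r.
  by rewrite [qconj _ + _]addrC -opprD addNr.
- by move=> r; rewrite mact_transvection -/p mulNr mulVr ?qunitE // mulrN1 opprB addrC subrK.
- by move=> s hs r; rewrite mact_transvection hs !mulr0 addr0.
Qed.

End SymplecticMaps.

Section WittExtension.
Variables (R : realType) (n : nat).
Local Notation vec := (qvec R n).
Implicit Types (z w u x y s : vec).

Lemma in_Sp_id : in_Sp (dmat 1 : qmat R n).
Proof. exact/in_Sp_dmat/qnorm2_1. Qed.

Lemma in_Sp_opp : in_Sp (dmat (-1) : qmat R n).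
Proof. by apply: in_Sp_dmat; quat_alg. Qed.

Lemma exists_Sp_map_negative u u' c :
  hform u u = qreal c -> hform u' u' = qreal c -> c < 0 ->
  exists A, in_Sp A /\ mact A u =1 u'.
Proof.
move=> hu hu' hc.
have huu : hform u u = hform u' u' by rewrite hu hu'.
have [hd|hd] := eqVneq (hform (fun r => u r - u' r) (fun r => u r - u' r)) 0; last first.
  by have [T [hT hTu _]] := exists_reflection huu hd; exists T.
pose v r := - u r.
have hvv : hform v v = hform u' u' by rewrite /v hformNl hformNr opprK.
(* the self-products of u - u' and -u - u' add up to 4c *)
have hd' : hform (fun r => v r - u' r) (fun r => v r - u' r) != 0.
  apply/eqP => /(congr1 (@qre R)); move/(congr1 (@qre R)): hd.
  rewrite /v !hformBl !hformBr !hformNl !hformNr opprK hu hu' /=; lra.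
have [T [hT hTv _]] := exists_reflection hvv hd'.
exists (mmul T (dmat (-1))); split; first exact: in_Sp_mmul hT in_Sp_opp.
by move=> r; rewrite mact_mmul -hTv; apply: eq_mact => i; rewrite mact_dmat mulN1r.
Qed.

Lemma exists_Sp_step x y u c :
  hform u u = qreal c -> c < 0 -> hform x x = hform y y -> hform x u = hform y u ->
  exists T, [/\ in_Sp T, mact T x =1 y & forall s, hform s x = hform s y -> mact T s =1 s].
Proof.
move=> hu hc hxy hxu.
have [hd|hd] := eqVneq (hform (fun r => x r - y r) (fun r => x r - y r)) 0.
  have hdu : hform (fun r => x r - y r) u = 0 by rewrite hformBl hxu subrr.
  have xy r : x r = y r.
    apply/eqP; rewrite -subr_eq0; apply/eqP.
    exact: null_orthogonal_negative_eq0 hu hc hdu hd r.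
  exists (dmat 1); split; first exact: in_Sp_id.
    by move=> r; rewrite mact_dmat mul1r.
  by move=> s _ r; rewrite mact_dmat mul1r.
have [T [hT hTx hTs]] := exists_reflection hxy hd.
by exists T; split => // s hs; apply: hTs; rewrite hformBr hs subrr.
Qed.

Lemma witt_extension m (P Q : 'I_m -> vec) u u' c :
  (forall k j, hform (P k) (P j) = hform (Q k) (Q j)) ->
  hform u u = qreal c -> hform u' u' = qreal c -> c < 0 ->
  (forall k, hform (P k) u = hform (Q k) u') ->
  exists A, in_Sp A /\ forall k, mact A (P k) =1 Q k.
Proof.
move=> hPQ hu hu' hc hPu.
suff /(_ m (leqnn m)) [A [hA _ hAP]] : forall k, (k <= m)%N -> exists A,
    [/\ in_Sp A, mact A u =1 u' & forall j : 'I_m, (j < k)%N -> mact A (P j) =1 Q j].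
  by exists A; split => // k; apply: hAP.
elim=> [_|k IH lt_km].
  by have [A [hA hAu]] := exists_Sp_map_negative hu hu' hc; exists A; split.
have [A [hA hAu hAP]] := IH (ltnW lt_km).
pose K := Ordinal lt_km; pose x := mact A (P K).
have hxu' : hform x u' = hform (Q K) u'.
  by rewrite -hPu -(hA (P K) u); apply: eq_hform => // r; rewrite hAu.
have hxx : hform x x = hform (Q K) (Q K) by rewrite hA hPQ.
have [T [hT hTx hTfix]] := exists_Sp_step hu' hc hxx hxu'.
exists (mmul T A); split; first exact: in_Sp_mmul.
  move=> r; rewrite mact_mmul (eq_mact _ hAu) hTfix //.
  by rewrite hformC hxu' -hformC.
move=> j; rewrite ltnS leq_eqVlt => /orP [/eqP jk|lt_jk] r; rewrite mact_mmul.
  by rewrite (_ : j = K) ?hTx //; apply: val_inj.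
rewrite (eq_mact _ (hAP j lt_jk)) hTfix //.
by rewrite -(eq_hform (hAP j lt_jk) (fun r => erefl (x r))) hA hPQ.
Qed.

Lemma witt_hyperbolic_pair m (P Q : 'I_m -> vec) (o0 o1 : 'I_m) :
  (forall k j, hform (P k) (P j) = hform (Q k) (Q j)) ->
  hform (P o0) (P o0) = 0 -> hform (P o1) (P o1) = 0 -> hform (P o1) (P o0) = 1 ->
  exists A, in_Sp A /\ forall k, mact A (P k) =1 Q k.
Proof.
move=> hPQ h00 h11 h10.
pose u r := P o0 r - P o1 r; pose u' r := Q o0 r - Q o1 r.
have hu : hform u u = qreal (-2).
  rewrite /u !hformBl !hformBr h00 h11 [hform (P o0) (P o1)]hformC h10 qconj1.
  by quat_alg.
have hu' : hform u' u' = qreal (-2) by rewrite -hu /u /u' !hformBl !hformBr !hPQ.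
have hPu k : hform (P k) u = hform (Q k) u' by rewrite !hformBr !hPQ.
by apply: witt_extension hPQ hu hu' _ hPu; lra.
Qed.

End WittExtension.

Section RotatedVectors.
Variable R : realType.
Implicit Types (mu x : quat R) (V W : seq (quat R)).

Definition qrot mu x := qconj mu * x * mu.

Lemma qrotM mu nu x : qrot nu (qrot mu x) = qrot (mu * nu) x.
Proof. by rewrite /qrot qconjM !mulrA. Qed.

Lemma qrot1 x : qrot 1 x = x.
Proof. by rewrite /qrot qconj1 mul1r mulr1. Qed.

Lemma qrot0 mu : qrot mu 0 = 0.
Proof. by rewrite /qrot mulr0 mul0r. Qed.

Lemma qrot_conj mu x : qconj (qrot mu x) = qrot mu (qconj x).
Proof. by rewrite /qrot !qconjM qconjK mulrA. Qed.

Lemma orbitVP V W : orbitV V W <-> exists2 mu, qnorm2 mu = 1 & W = map (qrot mu) V.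
Proof. by split=> [[mu [mu1 ->]]|[mu mu1 ->]]; exists mu. Qed.

Lemma orbitV_refl V : orbitV V V.
Proof.
apply/orbitVP; exists 1; first exact: qnorm2_1.
by rewrite -[LHS]map_id; apply: eq_map => x; rewrite qrot1.
Qed.

Lemma orbitV_rot V mu : qnorm2 mu = 1 ->
  forall W, orbitV (map (qrot mu) V) W <-> orbitV V W.
Proof.
move=> mu1 W; rewrite !orbitVP; have [mu_conj _] := qunit_norm mu1.
split=> -[nu nu1 ->].
  exists (mu * nu); first by rewrite qnorm2M mu1 nu1 mulr1.
  by rewrite -map_comp; apply: eq_map => x; rewrite /= qrotM.
exists (qconj mu * nu); first by rewrite qnorm2M qnorm2_conj mu1 nu1 mulr1.
by rewrite -map_comp; apply: eq_map => x; rewrite /= qrotM mulrA mu_conj mul1r.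
Qed.

End RotatedVectors.

Section GramVector.
Variables (R : realType) (m : nat).
Implicit Types (G H : 'I_m -> 'I_m -> quat R) (mu : quat R).

Lemma gentry_ord G (k j : 'I_m) : gentry G k j = G k j.
Proof. by rewrite /gentry !valK. Qed.

Lemma gentry_rot G H mu : (forall k j, H k j = qrot mu (G k j)) ->
  forall k j, gentry H k j = qrot mu (gentry G k j).
Proof.
move=> HG k j; rewrite /gentry.
by case: (insub k : option 'I_m) => [k'|]; case: (insub j : option 'I_m) => [j'|] //=;
  rewrite qrot0.
Qed.

Definition Vidx (i : nat) : seq (nat * nat) :=
  [seq (0%N, j) | j <- iota i (m - i)] ++
  flatten [seq [seq (k, j) | j <- iota k.+1 (m - k.+1)] | k <- iota 1 (m - 2)].

Lemma VrepE i G : Vrep i G = [seq gentry G p.1 p.2 | p <- Vidx i].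
Proof.
rewrite /Vrep /Vidx map_cat -map_comp map_flatten -map_comp.
by congr (_ ++ flatten _); apply: eq_map => k /=; rewrite -map_comp.
Qed.

Lemma mem_Vidx_first_row i j : (i <= j < m)%N -> (0%N, j) \in Vidx i.
Proof. by move=> hj; rewrite mem_cat map_f // mem_iota; lia. Qed.

Lemma mem_Vidx i k j : (1 <= k)%N -> (k < j < m)%N -> (k, j) \in Vidx i.
Proof.
move=> k1 hkj; rewrite mem_cat; apply/orP; right; apply/flattenP.
exists [seq (k, j) | j <- iota k.+1 (m - k.+1)]; last by rewrite map_f // mem_iota; lia.
by apply: (map_f (fun k => [seq (k, j) | j <- iota k.+1 (m - k.+1)])); rewrite mem_iota; lia.
Qed.

Lemma Vrep_rot i G H mu : (forall k j, H k j = qrot mu (G k j)) ->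
  Vrep i H = map (qrot mu) (Vrep i G).
Proof.
move=> HG; rewrite !VrepE -map_comp; apply: eq_map => -[k j] /=.
exact: gentry_rot.
Qed.

Lemma Vrep_rot_entries i G H mu : Vrep i H = map (qrot mu) (Vrep i G) ->
  forall p, p \in Vidx i -> gentry H p.1 p.2 = qrot mu (gentry G p.1 p.2).
Proof. by rewrite !VrepE -map_comp => /esym /eq_in_map e p /e. Qed.

End GramVector.

Section SemiNormalized.
Variables (R : realType) (m i : nat) (G : 'I_m -> 'I_m -> quat R).
Hypothesis SG : semi_normalized i G.

Lemma sn_diag_null (k : 'I_m) : (k < i)%N -> G k k = 0.
Proof. by case: SG => h _ _ _ _ hk; rewrite -gentry_ord h. Qed.

Lemma sn_diag_neg (k : 'I_m) : (i <= k)%N -> G k k = - 1.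
Proof. by case: SG => _ h _ _ _ hk; rewrite -gentry_ord h ?ltn_ord ?hk // qrealN. Qed.

Lemma sn_first_row_null (k j : 'I_m) : val k = 0 -> (1 <= j < i)%N -> G k j = 1.
Proof. by case: SG => _ _ h _ _ k0 hj; rewrite -gentry_ord k0 h. Qed.

Lemma sn_norm12 (k j : 'I_m) : val k = 1%N -> val j = 2%N -> qnorm2 (G k j) = 1.
Proof.
case: SG => _ _ _ h _ k1 j2; move: h; rewrite -j2 -k1 gentry_ord /qabs => h.
by rewrite -(sqr_sqrtr (qnorm2_ge0 (G k j))) h expr1n.
Qed.

Lemma sn_first_row_neg (k j : 'I_m) : val k = 0 -> (i <= j)%N ->
  exists2 r, 0 < r & G k j = qreal r.
Proof.
case: SG => _ _ _ _ h k0 hj; rewrite -gentry_ord k0.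
by have [|r [r0 e]] := h j; [rewrite hj ltn_ord | exists r].
Qed.

End SemiNormalized.

Section DiagonalRescaling.
Variables (R : realType) (m i : nat) (G H : 'I_m -> 'I_m -> quat R).
Variable lam : 'I_m -> quat R.
Hypotheses (i3 : (3 <= i)%N) (im : (i <= m)%N).
Hypotheses (SG : semi_normalized i G) (SH : semi_normalized i H).
Hypothesis HG : forall k j, H k j = qconj (lam k) * G k j * lam j.
Variable o0 : 'I_m.
Hypothesis o0E : val o0 = 0%N.

Lemma rescale_first_row (j : 'I_m) : (1 <= j < i)%N -> qconj (lam o0) * lam j = 1.
Proof.
move=> hj; have := HG o0 j.
by rewrite (sn_first_row_null SG o0E hj) (sn_first_row_null SH o0E hj) mulr1.
Qed.

Lemma rescale_norm1 : qnorm2 (lam o0) = 1.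
Proof.
(* |lam_0 lam_1| = |lam_0 lam_2| = |lam_1 lam_2| = 1 *)
have m1 : (1 < m)%N by lia. have m2 : (2 < m)%N by lia.
pose o1 := Ordinal m1; pose o2 := Ordinal m2.
have /(congr1 (@qnorm2 R)) e1 : qconj (lam o0) * lam o1 = 1.
  by apply: rescale_first_row => /=; lia.
have /(congr1 (@qnorm2 R)) e2 : qconj (lam o0) * lam o2 = 1.
  by apply: rescale_first_row => /=; lia.
have /(congr1 (@qnorm2 R)) e12 := HG o1 o2.
rewrite !qnorm2M !qnorm2_conj qnorm2_1 in e1 e2.
rewrite !qnorm2M qnorm2_conj (sn_norm12 SG (k := o1) (j := o2)) //
  (sn_norm12 SH (k := o1) (j := o2)) // in e12.
have := qnorm2_ge0 (lam o0); have := qnorm2_ge0 (lam o1).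
by have := qnorm2_ge0 (lam o2); nra.
Qed.

Lemma rescale_const k : lam k = lam o0.
Proof.
have [ki|ik] := ltnP k i.
  have [k0|k0] := posnP k; first by congr lam; apply: val_inj; rewrite /= k0.
  by apply: qunit_eq rescale_norm1 (rescale_first_row _); rewrite k0 ki.
have hkk := HG k k.
rewrite (sn_diag_neg SG ik) (sn_diag_neg SH ik) mulrN1 mulNr qconj_mul in hkk.
have lam_k1 : qnorm2 (lam k) = 1 by apply: qreal_inj; apply: oppr_inj.
have [r r0 Gr] := sn_first_row_neg SG o0E ik.
have [r' r'0 Hr] := sn_first_row_neg SH o0E ik.
have h0k := HG o0 k; rewrite Gr Hr -qreal_mulC -mulrA in h0k.
have /(congr1 (@qnorm2 R)) := h0k.
rewrite qnorm2M qnorm2M qnorm2_conj rescale_norm1 lam_k1 !qnorm2_real mul1r mulr1 => rr'.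
have r'r : r' = r by nra.
have r_unit : qreal r \is a GRing.unit.
  by rewrite qunitE; apply: contraTneq r0 => /(congr1 (@qre R)) /= ->; rewrite ltxx.
apply: qunit_eq rescale_norm1 _; apply: (mulrI r_unit).
by rewrite -h0k r'r mulr1.
Qed.

End DiagonalRescaling.

Section Congruence.
Variables (R : realType) (n m : nat).
Implicit Types (P Q : 'I_m -> qvec R n) (G H : 'I_m -> 'I_m -> quat R).

Lemma gramC P k j : gram P k j = qconj (gram P j k).
Proof. exact: hformC. Qed.

Lemma congruent_gram_rot i P Q : (3 <= i <= m)%N ->
  semi_normalized i (gram P) -> semi_normalized i (gram Q) -> congruent P Q ->
  exists2 mu, qnorm2 mu = 1 & forall k j, gram Q k j = qrot mu (gram P k j).
Proof.
move=> /andP [i3 im] SP SQ [A [hA PQ]].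
have scalar k : exists l : quat R, forall r, Q k r = mact A (P k) r * l.
  by have [l [_ hl]] := PQ k; exists l.
have [lam hlam] := fin_all_exists scalar.
have GH k j : gram Q k j = qconj (lam k) * gram P k j * lam j.
  by rewrite /gram (eq_hform (hlam j) (hlam k)) hformZl hformZr hA.
have m0 : (0 < m)%N by lia.
pose o0 := Ordinal m0; have o0E : val o0 = 0%N by [].
exists (lam o0); first by have := rescale_norm1 i3 im SP SQ GH o0E.
by move=> k j; rewrite GH !(rescale_const i3 im SP SQ GH o0E).
Qed.

Lemma gram_rot_of_Vrep i G H mu :
  semi_normalized i G -> semi_normalized i H -> qnorm2 mu = 1 ->
  (forall k j, G k j = qconj (G j k)) -> (forall k j, H k j = qconj (H j k)) ->
  Vrep i H = map (qrot mu) (Vrep i G) -> forall k j, H k j = qrot mu (G k j).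
Proof.
move=> SG SH mu1 hermG hermH VHG; have [_ conj_mu] := qunit_norm mu1.
suff upper (k j : 'I_m) : (k <= j)%N -> H k j = qrot mu (G k j).
  move=> k j; have [|/ltnW jk] := leqP k j; first exact: upper.
  by rewrite hermH upper // qrot_conj -hermG.
rewrite leq_eqVlt => /orP [/eqP/val_inj ->|kj].
  have [ji|ij] := ltnP j i.
    by rewrite (sn_diag_null SG ji) (sn_diag_null SH ji) qrot0.
  by rewrite (sn_diag_neg SG ij) (sn_diag_neg SH ij) /qrot mulrN1 mulNr conj_mu.
have [k0|k0] := posnP k.
  have [ji|ij] := ltnP j i.
    have hj : (1 <= j < i)%N by rewrite ji andbT; lia.
    by rewrite (sn_first_row_null SG k0 hj) (sn_first_row_null SH k0 hj) /qrot mulr1 conj_mu.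
  have hmem : (0%N, val j) \in Vidx m i by apply: mem_Vidx_first_row; rewrite ij ltn_ord.
  by have := Vrep_rot_entries VHG hmem; rewrite /= -k0 !gentry_ord.
have hmem : (val k, val j) \in Vidx m i by apply: mem_Vidx; rewrite ?kj ?ltn_ord.
by have := Vrep_rot_entries VHG hmem; rewrite /= !gentry_ord.
Qed.

Lemma congruent_of_gram_rot P Q (o0 o1 : 'I_m) mu :
  qnorm2 mu = 1 -> (forall k j, gram Q k j = qrot mu (gram P k j)) ->
  hform (P o0) (P o0) = 0 -> hform (P o1) (P o1) = 0 -> hform (P o1) (P o0) = 1 ->
  congruent P Q.
Proof.
move=> mu1 QP h00 h11 h10; have [mu_conj conj_mu] := qunit_norm mu1.
pose Q' k r := Q k r * qconj mu.
have PQ' k j : hform (P k) (P j) = hform (Q' k) (Q' j).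
  rewrite /Q' hformZl hformZr qconjK -/(gram Q j k) QP /qrot.
  by rewrite !mulrA mu_conj mul1r -mulrA mu_conj mulr1.
have [A [hA AP]] := witt_hyperbolic_pair PQ' h00 h11 h10.
exists A; split => // k; exists mu; split.
  by apply/eqP; rewrite -qnorm2_eq0 mu1 oner_eq0.
by move=> r; rewrite AP -quat_mulE /Q' -mulrA conj_mu mulr1.
Qed.

End Congruence.

Unset Implicit Arguments.

Theorem lemma8p8 (R : realType) (n m i : nat) (P Q : 'I_m -> qvec R n) :
  (1 <= n)%N -> (4 <= m)%N -> (3 <= i <= m)%N ->
  config i P -> config i Q ->
  semi_normalized i (gram P) -> semi_normalized i (gram Q) ->
  (congruent P Q <->
   (forall W, orbitV (Vrep i (gram P)) W <-> orbitV (Vrep i (gram Q)) W)).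
Proof.
move=> _ _ hi _ _ SP SQ; split=> [PQ W | VPQ].
  have [mu mu1 QP] := congruent_gram_rot hi SP SQ PQ.
  by rewrite (Vrep_rot i QP) orbitV_rot.
have /orbitVP [mu mu1 VQP] := (VPQ (Vrep i (gram Q))).2 (orbitV_refl _).
have QP := gram_rot_of_Vrep SP SQ mu1 (@gramC _ _ _ P) (@gramC _ _ _ Q) VQP.
have [i3 im] := andP hi.
have m0 : (0 < m)%N by lia.
have m1 : (1 < m)%N by lia.
apply: (congruent_of_gram_rot (o0 := Ordinal m0) (o1 := Ordinal m1) mu1 QP).
- by apply: (sn_diag_null SP (k := Ordinal m0)) => /=; lia.
- by apply: (sn_diag_null SP (k := Ordinal m1)) => /=; lia.
- by apply: (sn_first_row_null SP (k := Ordinal m0) (j := Ordinal m1)) => //=; lia.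
Qed.
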